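(* Let $u$ be a nonempty word, let $s$ be a nonempty prefix of $u$, and let $j$ be the length of the longest prefix of $u$ covered by $s$. Then $s$ is a left seed of $u$ if and only if $j\ge \mathrm{per}(u)$. In particular, if $s$ is the shortest left seed of $u$, then $s$ is the shortest cover of the prefix $u[1..j]$.
   Context: Positions in a word $u$ are numbered $1,\dots,|u|$; $u[i..j]=u_i\cdots u_j$. For a nonempty word $x$, $\mathrm{per}(x)$ is the smallest positive integer $p$ with $x_i=x_{i+p}$ for all $1\le i\le|x|-p$. A word $s$ covers a word $w$ (is a cover of $w$) if every position of $w$ lies inside some occurrence of $s$ as a factor of $w$. A word $s$ is a seed of $u$ if $s$ is a factor of $u$ and $u$ is a factor of some word covered by $s$; $s$ is a left seed of $u$ if $s$ is both a prefix of $u$ and a seed of $u$. *)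

From mathcomp Require Import all_boot.
Set Implicit Arguments. Unset Strict Implicit. Unset Printing Implicit Defensive.

(* Words are finite sequences over an alphabet A : eqType.
   Positions are 0-based internally: position i (0-based) = position i+1 in the paper. *)

Section Words.
Variable A : eqType.
Implicit Types u w s x : seq A.

Definition is_period x p : bool := (0 < p) && (take (size x - p) x == drop p x).

Lemma is_period_exists x : exists p, is_period x p.
Proof.
exists (size x).+1; rewrite /is_period /=.
by rewrite (_ : size x - (size x).+1 = 0) ?take0 ?drop_oversize // ?leqnSn //; apply/eqP; rewrite subn_eq0.
Qed.

Definition per x : nat := ex_minn (@is_period_exists x).

Definition occurs_at s w i : Prop := i + size s <= size w /\ take (size s) (drop i w) = s.

Definition covers s w : Prop :=
  forall k, k < size w -> exists i, occurs_at s w i /\ i <= k < i + size s.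

Definition factor s u : Prop := exists i, occurs_at s u i.

Definition seed s u : Prop := factor s u /\ exists w, covers s w /\ factor u w.

Definition left_seed s u : Prop := prefix s u /\ seed s u.

Definition shortest_left_seed s u : Prop :=
  left_seed s u /\ forall t, left_seed t u -> size s <= size t.

Definition shortest_cover s w : Prop :=
  covers s w /\ forall t, covers t w -> size s <= size t.

Definition longest_covered_prefix_len s u j : Prop :=
  j <= size u /\ covers s (take j u) /\
  forall k, k <= size u -> covers s (take k u) -> k <= j.

End Words.

From mathcomp Require Import all_boot.
From mathcomp Require Import zify.
Set Implicit Arguments. Unset Strict Implicit. Unset Printing Implicit Defensive.

(* If [s] covers a prefix [u[1..k]] with [per u <= k], the periodic extension of
   [u] is covered by translates (by multiples of [per u]) of the occurrences of [s]
   in [u[1..k]], so [s] is a left seed.  Conversely, if [s] is a left seed, look at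
   the occurrence of [s] covering position [j+1] of an occurrence of [u] in a word
   covered by [s]: either it lies inside [u], and then [u[1..j]] could be extended,
   contradicting maximality of [j], or it sticks out of [u], and then its offset
   [c <= j] is a period of [u] because [s] is a prefix of [u].  Finally, any cover
   of [u[1..j]] is a prefix of [u] covering [u[1..j]], hence a left seed. *)

Section Seeds.
Variables (A : eqType) (x0 : A).
Implicit Types u w s : seq A.

Lemma occurs_atP s w i : occurs_at s w i <->
  i + size s <= size w /\ forall t, t < size s -> nth x0 w (i + t) = nth x0 s t.
Proof.
rewrite /occurs_at; split=> [[le_sw eq_sw]|[le_sw eq_sw]]; split=> //.
  by move=> t lt_ts; rewrite -[in RHS]eq_sw nth_take // nth_drop.
apply: (@eq_from_nth _ x0) => [|t]; rewrite size_takel ?size_drop; try lia.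
by move=> lt_ts; rewrite nth_take // nth_drop eq_sw.
Qed.

Lemma is_periodP w p : is_period w p <->
  0 < p /\ forall t, t + p < size w -> nth x0 w t = nth x0 w (t + p).
Proof.
rewrite /is_period; split=> [/andP[p_gt0 /eqP eq_w] | [p_gt0 eq_w]].
  split=> // t lt_tw; have lt_t : t < size w - p by lia.
  by rewrite -(nth_take x0 lt_t) eq_w nth_drop addnC.
rewrite p_gt0; apply/eqP/(@eq_from_nth _ x0) => [|t].
  by rewrite size_takel ?size_drop //; lia.
rewrite size_takel => [lt_t|]; last by lia.
by rewrite nth_take // nth_drop addnC eq_w //; lia.
Qed.

Lemma nth_period_mod w p t : is_period w p -> t < size w ->
  nth x0 w t = nth x0 w (t %% p).
Proof.
case/is_periodP=> p_gt0 eq_w; rewrite {1 2}(divn_eq t p).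
elim: (t %/ p) => [|q IHq] lt_tw; first by rewrite mul0n add0n.
rewrite mulSnr addnAC -eq_w; last by lia.
by rewrite IHq //; lia.
Qed.

Lemma is_period_per w : is_period w (per w).
Proof. by rewrite /per; case: ex_minnP. Qed.

Lemma per_min w p : is_period w p -> per w <= p.
Proof. by rewrite /per; case: ex_minnP => m _; apply. Qed.

Lemma per_leq_size w : 0 < size w -> per w <= size w.
Proof. by move=> w_gt0; apply/per_min/is_periodP; split=> // t; lia. Qed.

Lemma prefix_occurs_at0 s u : prefix s u -> occurs_at s u 0.
Proof. by move=> pre_su; split; [exact: size_prefix | rewrite drop0; apply/eqP; rewrite -prefixE]. Qed.

Lemma occurs_at_take s u k i : occurs_at s (take k u) i -> occurs_at s u i.
Proof.
case/occurs_atP=> le_sk eq_s; apply/occurs_atP; split=> [|t lt_ts].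
  by apply: leq_trans le_sk _; rewrite size_take_min geq_minr.
by rewrite -eq_s // nth_take //; move: le_sk; rewrite size_take_min; lia.
Qed.

Lemma occurs_at_in_take s u k i :
  occurs_at s u i -> i + size s <= k -> occurs_at s (take k u) i.
Proof.
case/occurs_atP=> le_su eq_s le_sk; apply/occurs_atP; split=> [|t lt_ts].
  by rewrite size_take_min; lia.
by rewrite nth_take ?eq_s //; lia.
Qed.

Lemma covers_self s : covers s s.
Proof. by move=> k lt_ks; exists 0; split; [apply: prefix_occurs_at0; rewrite prefix_refl | lia]. Qed.

Lemma covers_prefix (t w : seq A) : 0 < size w -> covers t w -> prefix t w.
Proof.
move=> w_gt0 /(_ 0 w_gt0) [i [[le_tw eq_t] /andP[i_le0 _]]].
by move: i_le0 eq_t; rewrite leqn0 => /eqP->; rewrite drop0 prefixE => ->.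
Qed.

Lemma covers_take_extend s u j c :
  covers s (take j u) -> occurs_at s u c -> c <= j <= c + size s ->
  covers s (take (c + size s) u).
Proof.
move=> cov_j occ_c /andP[le_cj le_jc] k; rewrite size_take_min => lt_k.
have [lt_kj | le_jk] := ltnP k j.
  have [|i [occ_i cov_ik]] := cov_j k; first by rewrite size_take_min; lia.
  exists i; split=> //; apply: occurs_at_in_take (occurs_at_take occ_i) _.
  by case: occ_i; rewrite size_take_min; lia.
by exists c; split; [apply: occurs_at_in_take | lia].
Qed.

Lemma occurs_at_inner s u w a c :
  occurs_at u w a -> occurs_at s w (a + c) -> c + size s <= size u ->
  occurs_at s u c.
Proof.
case/occurs_atP=> _ eq_u /occurs_atP[_ eq_s] le_su; apply/occurs_atP.
by split=> // t lt_ts; rewrite -eq_u ?addnA ?eq_s //; lia.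
Qed.

Lemma overhang_is_period s u w a c :
  prefix s u -> occurs_at u w a -> occurs_at s w (a + c) ->
  size u < c + size s -> is_period u c.
Proof.
move=> pre_su /occurs_atP[_ eq_u] /occurs_atP[_ eq_s] lt_us.
have le_su := size_prefix pre_su.
case/occurs_atP: (prefix_occurs_at0 pre_su) => _ eq_s0.
apply/is_periodP; split=> [|t lt_tu]; first by lia.
rewrite -[RHS]eq_u; last by lia.
by rewrite (addnC t) addnA eq_s -?(eq_s0 t) ?add0n //; lia.
Qed.

Definition periodic_ext u p n := mkseq (fun i => nth x0 u (i %% p)) n.

Lemma size_periodic_ext u p n : size (periodic_ext u p n) = n.
Proof. exact: size_mkseq. Qed.

Lemma occurs_at_periodic_ext s u p n m i :
  is_period u p -> occurs_at s u i -> m * p + i + size s <= n ->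
  occurs_at s (periodic_ext u p n) (m * p + i).
Proof.
move=> per_p /occurs_atP[le_su eq_s] le_n; apply/occurs_atP.
rewrite size_periodic_ext; split=> // t lt_ts.
rewrite nth_mkseq; last by lia.
by rewrite -addnA modnMDl -nth_period_mod ?eq_s //; lia.
Qed.

Lemma window_of_multiple p k N i : 0 < p -> p <= k -> i < N * p + k ->
  exists2 m, m <= N & m * p <= i < m * p + k.
Proof.
move=> p_gt0 le_pk lt_i; have [le_iN | lt_Ni] := leqP (i %/ p) N.
  exists (i %/ p) => //; rewrite leq_trunc_div /=.
  by have := ltn_pmod i p_gt0; have := divn_eq i p; lia.
exists N => //; apply/andP; split=> //.
by apply: leq_trans (leq_trunc_div i p); rewrite leq_mul2r ltnW ?orbT.
Qed.

Lemma covers_periodic_ext s u p k N :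
  is_period u p -> p <= k -> k <= size u -> covers s (take k u) ->
  covers s (periodic_ext u p (N * p + k)).
Proof.
move=> per_p le_pk le_ku cov_k i; rewrite size_periodic_ext => lt_i.
have p_gt0 : 0 < p by case/is_periodP: per_p.
have [m le_mN /andP[le_mi lt_im]] := window_of_multiple p_gt0 le_pk lt_i.
have [|i' [occ_i' cov_i']] := cov_k (i - m * p); first by rewrite size_takel; lia.
have [le_i'k _] := occ_i'; rewrite size_takel // in le_i'k.
exists (m * p + i'); split; last by lia.
apply: occurs_at_periodic_ext (occurs_at_take occ_i') _ => //.
by rewrite -addnA leq_add ?leq_mul2r ?le_mN ?orbT.
Qed.

Lemma left_seed_of_covered_prefix s u k :
  prefix s u -> k <= size u -> per u <= k -> covers s (take k u) ->
  left_seed s u.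
Proof.
move=> pre_su le_ku le_pk cov_k; have per_u := is_period_per u.
have p_gt0 : 0 < per u by case/is_periodP: per_u.
split=> //; split; first by exists 0; apply: prefix_occurs_at0.
exists (periodic_ext u (per u) (size u * per u + k)).
split; first exact: covers_periodic_ext.
exists 0; apply/occurs_atP; rewrite size_periodic_ext; split.
  by apply: leq_trans (leq_addr _ _); apply: leq_pmulr.
move=> t lt_tu; rewrite nth_mkseq -?nth_period_mod //.
by apply: leq_trans (leq_addr _ _); apply: leq_trans (leq_pmulr _ p_gt0).
Qed.

Lemma size_leq_longest_covered s u j :
  prefix s u -> longest_covered_prefix_len s u j -> size s <= j.
Proof.
move=> pre_su [_ [_ max_j]]; apply: max_j; first exact: size_prefix.
by move: (pre_su); rewrite prefixE => /eqP->; apply: covers_self.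
Qed.

Lemma per_leq_longest_covered s u j : 0 < size u ->
  prefix s u -> longest_covered_prefix_len s u j -> left_seed s u -> per u <= j.
Proof.
move=> u_gt0 pre_su lcp_j [_ [_ [w [cov_w [a occ_u]]]]].
have le_sj := size_leq_longest_covered pre_su lcp_j.
have [_ [cov_j max_j]] := lcp_j.
have [le_uj | lt_ju] := leqP (size u) j; first exact: leq_trans (per_leq_size u_gt0) le_uj.
have [|b [occ_b /andP[le_b lt_b]]] := cov_w (a + j); first by case: occ_u; lia.
have [lt_ba | le_ab] := ltnP b a; first by lia.
rewrite -(subnKC le_ab) in occ_b.
have [le_cu | lt_uc] := leqP (b - a + size s) (size u).
  have cov_c : covers s (take (b - a + size s) u).
    apply: covers_take_extend cov_j (occurs_at_inner occ_u occ_b le_cu) _; lia.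
  by have := max_j _ le_cu cov_c; lia.
by apply: leq_trans (per_min (overhang_is_period pre_su occ_u occ_b lt_uc)) _; lia.
Qed.

End Seeds.

Theorem lemma1 (A : eqType) (u s : seq A) (j : nat) :
  u != [::] -> s != [::] -> prefix s u ->
  longest_covered_prefix_len s u j ->
  (left_seed s u <-> per u <= j) /\
  (shortest_left_seed s u -> shortest_cover s (take j u)).
Proof.
case: u => // x0 u' _; set u := x0 :: u' => s_neq0 pre_su lcp_j.
have [le_ju [cov_j _]] := lcp_j.
have left_seedE : left_seed s u <-> per u <= j.
  split; first exact: per_leq_longest_covered.
  by move=> le_pj; apply: left_seed_of_covered_prefix le_ju le_pj cov_j.
split=> // -[/left_seedE le_pj min_s]; split=> // t cov_t; apply: min_s.
have j_gt0 : 0 < size (take j u).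
  rewrite size_takel // (leq_trans _ (size_leq_longest_covered pre_su lcp_j)) //.
  by rewrite lt0n size_eq0.
have pre_tu : prefix t u := prefix_trans (covers_prefix j_gt0 cov_t) (prefix_take _ _).
exact: left_seed_of_covered_prefix pre_tu le_ju le_pj cov_t.
Qed.
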